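(* Let $A\in\mathbb{R}^{d\times d}$, $B\in\mathbb{R}^{d\times n}$, $\rho>0$, and let $M=\begin{bmatrix} Q & S^*\\ S & R\end{bmatrix}$ be a symmetric $(d+n)\times(d+n)$ real matrix with $Q=Q^*\in\mathbb{R}^{d\times d}$, $S\in\mathbb{R}^{n\times d}$, $R=R^*\in\mathbb{R}^{n\times n}$. If there exist $N\in\mathbb{R}^{n\times d}$ and $\varepsilon\in[0,2/\|R\|]$ such that $A+B(I+\varepsilon R)N+\varepsilon BS$ is $\rho$-Schur and \[ Q + 2\,\Re\, S^*N + N^*RN \geq 0, \] then $(A,B,M)$ is $\rho$-minimally stable.
   Context: Let $\ell_k$ denote the space of sequences indexed by $\mathbb{N}_{\ge0}$ with values in $\mathbb{R}^k$. $\mathcal{B}(A,B)=\{(x,u)\in\ell_{d+n}: x(k+1)=Ax(k)+Bu(k)\ \forall k\}$. A pair $(x,u)\in\ell_{d+n}$ belongs to $\mathrm{IQC}(M,\rho)$ if $\sum_{k=0}^N \rho^{-2k}\big(\langle Qx(k),x(k)\rangle + 2\langle Sx(k),u(k)\rangle + \langle Ru(k),u(k)\rangle\big)\ge 0$ for all $N\ge0$. The triple $(A,B,M)$ is $\rho$-minimally stable if for every $x_0\in\mathbb{R}^d$ there exists $(x,u)\in\mathcal{B}(A,B)\cap\mathrm{IQC}(M,\rho)$ with $x(0)=x_0$ and $\rho^{-k}x(k)\to0$ as $k\to\infty$. A square matrix is $\rho$-Schur if all its eigenvalues lie in the open disk of radius $\rho$. $\|R\|$ is the operator norm. *)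

From HB Require Import structures.
From mathcomp Require Import all_boot all_order all_algebra.
From mathcomp Require Import all_classical all_reals all_analysis.
From mathcomp Require Import complex.
Set Implicit Arguments. Unset Strict Implicit. Unset Printing Implicit Defensive.
Import Order.TTheory GRing.Theory Num.Theory.
Import numFieldNormedType.Exports.
Local Open Scope ring_scope.
Local Open Scope classical_set_scope.
Local Open Scope complex_scope.

Definition euclid_norm (R : realType) (m : nat) (v : 'cV[R]_m) : R :=
  Num.sqrt (\sum_(i < m) v i 0 ^+ 2).

Definition op_norm (R : realType) (m n : nat) (T : 'M[R]_(m, n)) : R :=
  sup [set euclid_norm (T *m v) | v in [set v : 'cV[R]_n | euclid_norm v <= 1]].

Definition rho_Schur (R : realType) (d : nat) (A : 'M[R]_d) (rho : R) : Prop :=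
  forall lambda : R[i],
    eigenvalue (map_mx (real_complex R) A) lambda -> `|lambda| < rho%:C.

Definition psd (R : realType) (d : nat) (P : 'M[R]_d) : Prop :=
  forall x : 'cV[R]_d, 0 <= (x^T *m P *m x) 0 0.

Definition behavior (R : realType) (d n : nat) (A : 'M[R]_d) (B : 'M[R]_(d, n))
    (x : nat -> 'cV[R]_d) (u : nat -> 'cV[R]_n) : Prop :=
  forall k, x k.+1 = A *m x k + B *m u k.

(* IQC(M, rho), with M = [Q S^T; S R]. *)
Definition IQC (R : realType) (d n : nat) (Q : 'M[R]_d) (S : 'M[R]_(n, d))
    (Rm : 'M[R]_n) (rho : R)
    (x : nat -> 'cV[R]_d) (u : nat -> 'cV[R]_n) : Prop :=
  forall N : nat,
    0 <= \sum_(0 <= k < N.+1) rho ^- (2 * k) *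
          (((x k)^T *m Q *m x k) 0 0 + 2 * ((u k)^T *m S *m x k) 0 0
           + ((u k)^T *m Rm *m u k) 0 0).

Definition rho_minimally_stable (R : realType) (d n : nat) (A : 'M[R]_d)
    (B : 'M[R]_(d, n)) (Q : 'M[R]_d) (S : 'M[R]_(n, d)) (Rm : 'M[R]_n)
    (rho : R) : Prop :=
  forall x0 : 'cV[R]_d, exists (x : nat -> 'cV[R]_d) (u : nat -> 'cV[R]_n),
    [/\ behavior A B x u, IQC Q S Rm rho x u, x 0%N = x0 &
        (fun k => rho ^- k *: x k) @ \oo --> (0 : 'cV[R]_d)].

(* Close the loop with the state feedback u = K x, K = (I + eps R) N + eps S,
   so that x(k) = (A + B K)^k x0.  With w = R N x + S x we have u = N x + eps w,
   and the IQC summand splits as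
     x^T (Q + S^T N + N^T S + N^T R N) x + eps (2 |w|^2 + eps w^T R w),
   where |w^T R w| <= ||R|| |w|^2 <= (2 / eps) |w|^2: every summand is
   nonnegative.  For the decay, rho^-k (A + B K)^k = G^k where the complex
   spectrum of G lies in the open unit disk.  By Cayley-Hamilton the product of
   the G - z over the eigenvalues z vanishes; peeling off one factor at a time
   reduces everything to the scalar recursion s(k+1) = z s(k) + h(k) with
   |z| < 1 and h -> 0, which forces s -> 0. *)
From HB Require Import structures.
From mathcomp Require Import all_boot all_order all_algebra.
From mathcomp Require Import all_classical all_reals all_analysis.
From mathcomp Require Import complex lra.
Set Implicit Arguments. Unset Strict Implicit. Unset Printing Implicit Defensive.
Import Order.TTheory GRing.Theory Num.Theory.
Import numFieldNormedType.Exports.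
Local Open Scope ring_scope.
Local Open Scope classical_set_scope.

Section PerturbedContraction.
Variable R : realType.

Lemma contraction_geometric_le (b : nat -> R) (r : R) : 0 <= r ->
  (forall k, b k.+1 <= r * b k) -> forall k, b k <= r ^+ k * b 0.
Proof.
move=> r0 hb; elim=> [|k IH]; first by rewrite expr0 mul1r.
by rewrite exprS -mulrA (le_trans (hb k)) // ler_wpM2l.
Qed.

Lemma cvg0_perturbed_contraction (a g : nat -> R) (r : R) : 0 <= r -> r < 1 ->
  (forall k, 0 <= a k) -> (forall k, a k.+1 <= r * a k + g k) ->
  g @ \oo --> 0 -> a @ \oo --> 0.
Proof.
move=> r0 r1 a_ge0 ha g0; apply/cvgr0Pnorm_lt => e e0.
have e2_gt0 : 0 < e / 2 by rewrite divr_gt0.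
have eps_gt0 : 0 < e / 2 * (1 - r) by rewrite mulr_gt0 ?subr_gt0.
have [K _ gK] := cvgr0_norm_lt _ g0 _ eps_gt0.
(* Beyond K, the excess of a over e/2 contracts geometrically. *)
pose b j := a (j + K)%N - e / 2.
have b_contr j : b j.+1 <= r * b j.
  have /ltW := gK (j + K)%N (leq_addl _ _); have := ler_norm (g (j + K)%N).
  by have := ha (j + K)%N; rewrite /b addSn; nra.
have b_small : \forall j \near \oo, b j < e / 2.
  have /cvgr0_norm_lt : (fun j => r ^+ j * b 0%N) @ \oo --> 0.
    by rewrite -(mul0r (b 0%N)); apply: cvgMr_tmp; apply: cvg_expr; rewrite ger0_norm.
  move=> /(_ _ e2_gt0); apply: filterS => j.
  by apply: le_lt_trans; apply: le_trans (contraction_geometric_le r0 b_contr j) (ler_norm _).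
near=> k.
have: b (k - K)%N < e / 2 by near: k; exact: cvg_subnr b_small.
have kK : (K <= k)%N by near: k; exists K.
by rewrite /b subnK // ger0_norm //; lra.
Unshelve. all: by end_near.
Qed.

End PerturbedContraction.

Local Open Scope complex_scope.
Import Normc.

Section ComplexOrbits.
Variable R : realType.

Lemma normr_normc (z : R[i]) : `|z| = (normc z)%:C.
Proof. by case: z. Qed.

Lemma normc_ge0 (z : R[i]) : 0 <= normc z.
Proof. by case: z => a b; exact: sqrtr_ge0. Qed.

Lemma normc_real (r : R) : normc r%:C = `|r|.
Proof. by rewrite /normc /= expr0n addr0 sqrtr_sqr. Qed.

Definition orbit_vanishes n (G : 'M[R[i]]_n) (w : 'cV[R[i]]_n) : Prop :=
  forall i, (fun k => normc ((G ^+ k *m w) i 0)) @ \oo --> 0.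

Lemma orbit_vanishes_factor n (G : 'M[R[i]]_n) (z : R[i]) w : normc z < 1 ->
  orbit_vanishes G ((G - z%:M) *m w) -> orbit_vanishes G w.
Proof.
move=> z1 Gzw i; apply: (cvg0_perturbed_contraction (normc_ge0 z) z1 _ _ (Gzw i)).
  by move=> k; exact: normc_ge0.
move=> k; have -> : G ^+ k.+1 *m w = z *: (G ^+ k *m w) + G ^+ k *m ((G - z%:M) *m w).
  rewrite mulmxBl mul_scalar_mx mulmxBr -scalemxAr mulmxA mulmxE -exprSr.
  by rewrite addrC subrK.
by rewrite !mxE -normcM le_normcD.
Qed.

Lemma orbit_vanishes_prod n (G : 'M[R[i]]_n) (zs : seq R[i]) w :
  all (fun z => normc z < 1) zs ->
  orbit_vanishes G ((\prod_(z <- zs) (G - z%:M)) *m w) -> orbit_vanishes G w.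
Proof.
elim: zs w => [|z zs IH] w /=; first by rewrite big_nil mul1mx.
move=> /andP[z1 zs1]; rewrite big_cons -mulmxE -mulmxA => Gw.
by apply: IH => //; apply: orbit_vanishes_factor z1 Gw.
Qed.

(* Stated for 'M_n.+1 because horner_mx, hence Cayley-Hamilton, needs it. *)
Lemma orbit_vanishes_spectrum n (G : 'M[R[i]]_n.+1) :
  (forall z, eigenvalue G z -> normc z < 1) -> forall w, orbit_vanishes G w.
Proof.
move=> spec w; have [zs charGE] := closed_field_poly_normal (char_poly G).
rewrite (monicP (char_poly_monic _)) scale1r in charGE.
have zs1 : all (fun z => normc z < 1) zs.
  by apply/allP => z zs_z; apply/spec; rewrite eigenvalue_root_char charGE root_prod_XsubC.
apply: orbit_vanishes_prod zs1 _ => i.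
have -> : \prod_(z <- zs) (G - z%:M) = 0.
  rewrite -(Cayley_Hamilton G) charGE rmorph_prod; apply: eq_bigr => z _.
  by rewrite rmorphB /= horner_mx_X horner_mx_C.
under eq_fun do rewrite mul0mx mulmx0 mxE normc0.
exact: cvg_cst.
Qed.

End ComplexOrbits.

Section SchurOrbits.
Variable R : realType.
Local Notation toC := (real_complex R).

Lemma cvg_mx0_entrywise m n (f : nat -> 'M[R]_(m, n)) :
  (forall i j, (fun k => f k i j) @ \oo --> (0 : R)) -> f @ \oo --> (0 : 'M[R]_(m, n)).
Proof.
move=> f0; apply/cvgr0Pnorm_lt => e e0.
have : \forall k \near \oo, forall ij : 'I_m * 'I_n, `|f k ij.1 ij.2| < e.
  by apply: filter_forall => -[i j]; exact: cvgr0_norm_lt (f0 i j) e e0.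
apply: filterS => k fk; rewrite -[`|_|]/(mx_norm _) mx_normrE.
by apply: bigmax_lt => // ij _; exact: fk.
Qed.

Lemma rho_Schur_scaled_spectrum d (F : 'M[R]_d) (rho : R) : 0 < rho ->
  rho_Schur F rho ->
  forall z, eigenvalue (map_mx toC (rho^-1 *: F)) z -> normc z < 1.
Proof.
move=> rho0 FS z /eigenvalueP[v vG v0].
have /FS : eigenvalue (map_mx toC F) (rho%:C * z).
  apply/eigenvalueP; exists v => //.
  rewrite -scalerA -vG map_mxZ -scalemxAr scalerA -rmorphM /=.
  by rewrite mulfV ?gt_eqF // scale1r.
rewrite normrM !normr_normc normc_real ger0_norm ?ltW // -rmorphM ltcR.
by rewrite -[X in _ < X]mulr1 ltr_pM2l.
Qed.

Lemma rho_Schur_cvg0 d (F : 'M[R]_d) (rho : R) (x0 : 'cV[R]_d) : 0 < rho ->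
  rho_Schur F rho -> (fun k => rho ^- k *: (F ^+ k *m x0)) @ \oo --> (0 : 'cV[R]_d).
Proof.
case: d F x0 => [|d] F x0 rho0 FS.
  by under eq_fun do rewrite flatmx0; exact: cvg_cst.
under eq_fun do rewrite scalemxAl -exprVn -exprZn.
apply: cvg_mx0_entrywise => i j; rewrite (ord1 j); apply: norm_cvg0.
have := orbit_vanishes_spectrum (rho_Schur_scaled_spectrum rho0 FS) (map_mx toC x0) i.
by under eq_fun do rewrite -rmorphXn -map_mxM mxE normc_real.
Qed.

End SchurOrbits.

Local Close Scope complex_scope.

Section EuclideanGeometry.
Variable R : realType.
Implicit Types (m n : nat).

Definition dot m (a b : 'cV[R]_m) : R := (a^T *m b) 0 0.

Lemma quad_mxE m n (a : 'cV[R]_m) (M : 'M[R]_(m, n)) b :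
  (a^T *m M *m b) 0 0 = dot a (M *m b).
Proof. by rewrite /dot mulmxA. Qed.

Lemma dotC m (a b : 'cV[R]_m) : dot a b = dot b a.
Proof. by rewrite /dot -[a^T *m b]trmxK trmx_mul trmxK mxE. Qed.

Lemma dotDr m (a b c : 'cV[R]_m) : dot a (b + c) = dot a b + dot a c.
Proof. by rewrite /dot mulmxDr mxE. Qed.

Lemma dotDl m (a b c : 'cV[R]_m) : dot (a + b) c = dot a c + dot b c.
Proof. by rewrite dotC dotDr !(dotC c). Qed.

Lemma dotZr m (a b : 'cV[R]_m) t : dot a (t *: b) = t * dot a b.
Proof. by rewrite /dot -scalemxAr mxE. Qed.

Lemma dotZl m (a b : 'cV[R]_m) t : dot (t *: a) b = t * dot a b.
Proof. by rewrite dotC dotZr dotC. Qed.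

Lemma dot_mulmxl m n (M : 'M[R]_(n, m)) (a : 'cV[R]_m) b :
  dot (M *m a) b = dot a (M^T *m b).
Proof. by rewrite /dot trmx_mul mulmxA. Qed.

Lemma euclid_norm_sqr m (a : 'cV[R]_m) : euclid_norm a ^+ 2 = dot a a.
Proof.
rewrite sqr_sqrtr ?sumr_ge0// => [|i _]; last exact: sqr_ge0.
by rewrite /dot mxE; apply: eq_bigr => i _; rewrite mxE expr2.
Qed.

Lemma dot_ge0 m (a : 'cV[R]_m) : 0 <= dot a a.
Proof. by rewrite -euclid_norm_sqr sqr_ge0. Qed.

Lemma euclid_norm_ge0 m (a : 'cV[R]_m) : 0 <= euclid_norm a.
Proof. exact: sqrtr_ge0. Qed.

Lemma euclid_norm0 m : euclid_norm (0 : 'cV[R]_m) = 0.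
Proof. by rewrite /euclid_norm big1 ?sqrtr0// => i _; rewrite mxE expr0n. Qed.

Lemma euclid_norm_eq0 m (a : 'cV[R]_m) : euclid_norm a = 0 -> a = 0.
Proof.
move=> /eqP; rewrite sqrtr_eq0 le_eqVlt ltNge sumr_ge0 ?orbF => [|i _]; last exact: sqr_ge0.
move=> /eqP/psumr_eq0P a0; apply/matrixP => i j; rewrite (ord1 j) mxE.
by apply/eqP; rewrite -sqrf_eq0; apply/eqP/a0 => // k _; exact: sqr_ge0.
Qed.

Lemma euclid_normZ m t (a : 'cV[R]_m) : euclid_norm (t *: a) = `|t| * euclid_norm a.
Proof.
rewrite /euclid_norm -sqrtr_sqr -sqrtrM ?sqr_ge0 // mulr_sumr.
by congr Num.sqrt; apply: eq_bigr => i _; rewrite mxE exprMn.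
Qed.

Lemma entry_le_euclid_norm m (a : 'cV[R]_m) i : `|a i 0| <= euclid_norm a.
Proof.
rewrite -sqrtr_sqr; apply: ler_wsqrtr; rewrite (bigD1 i) //= lerDl.
by apply: sumr_ge0 => k _; exact: sqr_ge0.
Qed.

Lemma euclid_norm_mulmx_bounded m n (M : 'M[R]_(m, n)) :
  has_ubound [set euclid_norm (M *m v) | v in [set v | euclid_norm v <= 1]].
Proof.
exists (Num.sqrt (\sum_i (\sum_j `|M i j|) ^+ 2)) => _ [v /= v1 <-].
apply: ler_wsqrtr; apply: ler_sum => i _; rewrite -real_normK ?num_real //.
rewrite lerXn2r ?nnegrE ?sumr_ge0 // mxE.
apply: le_trans (ler_norm_sum _ _ _) _; apply: ler_sum => j _.
rewrite normrM -[leRHS]mulr1 ler_wpM2l //.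
exact: le_trans (entry_le_euclid_norm v j) v1.
Qed.

Lemma op_norm_ub m n (M : 'M[R]_(m, n)) v : euclid_norm v <= 1 ->
  euclid_norm (M *m v) <= op_norm M.
Proof.
move=> v1; apply: sup_upper_bound; last by exists v.
by split; [exists (euclid_norm (M *m v)), v | exact: euclid_norm_mulmx_bounded].
Qed.

Lemma op_norm_ge0 m n (M : 'M[R]_(m, n)) : 0 <= op_norm M.
Proof.
rewrite -(euclid_norm0 m) -(mulmx0 _ M) op_norm_ub // euclid_norm0; exact: ler01.
Qed.

Lemma euclid_norm_mulmx_le m n (M : 'M[R]_(m, n)) v :
  euclid_norm (M *m v) <= op_norm M * euclid_norm v.
Proof.
have [/euclid_norm_eq0 ->|v0] := eqVneq (euclid_norm v) 0.
  by rewrite mulmx0 !euclid_norm0 mulr0.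
have v_gt0 : 0 < euclid_norm v by rewrite lt_def v0 euclid_norm_ge0.
have := op_norm_ub M (v := (euclid_norm v)^-1 *: v).
rewrite -scalemxAr !euclid_normZ ger0_norm ?invr_ge0 ?euclid_norm_ge0 // mulVf //.
by move=> /(_ (lexx _)); rewrite ler_pdivrMl // mulrC.
Qed.

Lemma dot_mulmx_ge_op_norm m (M : 'M[R]_m) w :
  - op_norm M * dot w w <= dot w (M *m w).
Proof.
have Mw_le : dot (M *m w) (M *m w) <= op_norm M ^+ 2 * dot w w.
  rewrite -!euclid_norm_sqr -exprMn lerXn2r ?nnegrE ?euclid_norm_mulmx_le ?euclid_norm_ge0 //.
  exact: mulr_ge0 (op_norm_ge0 M) (euclid_norm_ge0 w).
have [M0|M_neq0] := eqVneq (op_norm M) 0.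
  suff -> : M *m w = 0 by rewrite M0 oppr0 mul0r /dot mulmx0 mxE.
  apply: euclid_norm_eq0; apply/eqP; rewrite eq_le euclid_norm_ge0 andbT.
  by have := euclid_norm_mulmx_le M w; rewrite M0 mul0r.
have M_gt0 : 0 < op_norm M by rewrite lt_def M_neq0 op_norm_ge0.
have := dot_ge0 (op_norm M *: w + M *m w).
rewrite !dotDl !dotDr !dotZl !dotZr (dotC (M *m w) w).
by have := dot_ge0 w; move: Mw_le M_gt0; nra.
Qed.

End EuclideanGeometry.

Section SupplyRate.
Variables (R : realType) (d n : nat) (Q : 'M[R]_d) (S : 'M[R]_(n, d)) (Rm : 'M[R]_n).
Implicit Types (v : 'cV[R]_d) (u y : 'cV[R]_n).

Definition iqc_form v u : R :=
  (v^T *m Q *m v) 0 0 + 2 * (u^T *m S *m v) 0 0 + (u^T *m Rm *m u) 0 0.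

Lemma iqc_form_psd (N : 'M[R]_(n, d)) v :
  psd (Q + (S^T *m N + N^T *m S) + N^T *m Rm *m N) -> 0 <= iqc_form v (N *m v).
Proof.
move=> /(_ v); rewrite /iqc_form !quad_mxE !mulmxDl !dotDr -!mulmxA -!dot_mulmxl.
by rewrite (dotC (S *m v)); lra.
Qed.

Lemma iqc_form_addr v u y : Rm^T = Rm ->
  iqc_form v (u + y) = iqc_form v u + 2 * dot y (Rm *m u + S *m v) + dot y (Rm *m y).
Proof.
move=> RmT; rewrite /iqc_form !quad_mxE mulmxDr !dotDl !dotDr.
by rewrite [dot u (Rm *m y)]dotC dot_mulmxl RmT; lra.
Qed.

Lemma iqc_form_feedback_ge0 (N : 'M[R]_(n, d)) (eps : R) v :
  Rm^T = Rm -> 0 <= eps -> eps * op_norm Rm <= 2 ->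
  psd (Q + (S^T *m N + N^T *m S) + N^T *m Rm *m N) ->
  0 <= iqc_form v (((1%:M + eps *: Rm) *m N + eps *: S) *m v).
Proof.
move=> RmT eps_ge0 eps_le Npsd.
set w := Rm *m (N *m v) + S *m v.
have -> : ((1%:M + eps *: Rm) *m N + eps *: S) *m v = N *m v + eps *: w.
  by rewrite /w scalerDr !mulmxDl mul1mx -!scalemxAl mulmxA addrA.
rewrite iqc_form_addr // -/w -scalemxAr !dotZl !dotZr.
have step_ge0 : 0 <= 2 * dot w w + eps * dot w (Rm *m w).
  have := dot_mulmx_ge_op_norm Rm w; have := dot_ge0 w.
  by move: eps_ge0 eps_le; nra.
have := mulr_ge0 eps_ge0 step_ge0.
have := iqc_form_psd v Npsd; nra.
Qed.

End SupplyRate.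

Lemma behavior_state_feedback (R : realType) d n (A : 'M[R]_d) (B : 'M[R]_(d, n))
    (K : 'M[R]_(n, d)) (x0 : 'cV[R]_d) :
  behavior A B (fun k => (A + B *m K) ^+ k *m x0)
    (fun k => K *m ((A + B *m K) ^+ k *m x0)).
Proof. by move=> k /=; rewrite exprS -mulmxA mulmxDl !mulmxA. Qed.

Unset Implicit Arguments.
Local Close Scope classical_set_scope.
Local Open Scope complex_scope.

Theorem lemma2p4 (R : realType) (d n : nat) (A : 'M[R]_d) (B : 'M[R]_(d, n))
    (Q : 'M[R]_d) (S : 'M[R]_(n, d)) (Rm : 'M[R]_n) (rho : R) :
  0 < rho -> Q^T = Q -> Rm^T = Rm ->
  (exists (N : 'M[R]_(n, d)) (eps : R),
      [/\ 0 <= eps, eps * op_norm Rm <= 2,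
          rho_Schur (A + B *m (1%:M + eps *: Rm) *m N + eps *: (B *m S)) rho &
          psd (Q + (S^T *m N + N^T *m S) + N^T *m Rm *m N)]) ->
  rho_minimally_stable A B Q S Rm rho.
Proof.
move=> rho_gt0 _ RmT [N [eps [eps_ge0 eps_le Schur Npsd]]] x0.
pose K := (1%:M + eps *: Rm) *m N + eps *: S.
have closed_loopE : A + B *m (1%:M + eps *: Rm) *m N + eps *: (B *m S) = A + B *m K.
  by rewrite /K [in RHS]mulmxDr [in RHS]mulmxA -scalemxAr addrA.
rewrite closed_loopE in Schur.
exists (fun k => (A + B *m K) ^+ k *m x0), (fun k => K *m ((A + B *m K) ^+ k *m x0)).
split.
- exact: behavior_state_feedback.
- move=> T; apply: sumr_ge0 => k _.
  apply: mulr_ge0; first by rewrite invr_ge0 exprn_ge0 // ltW.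
  exact: iqc_form_feedback_ge0.
- by rewrite expr0 mul1mx.
- exact: rho_Schur_cvg0.
Qed.
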